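(* Let $q$ be a prime power and $n$ a positive integer with $\gcd(n,q)=1$, and let $m=\mathrm{ord}_n(q)$ (the multiplicative order of $q$ modulo $n$); assume $m>3$. Then the narrow-sense bicyclic hyperbolic code of length $n\times n$ over $\mathbb{F}_q$ with design distance $d$ contains its Euclidean dual whenever $2\le d\le\Delta$, where $$\Delta=\begin{cases}\dfrac{n^2}{(q^m-1)^2}\Big[(q^m-1)-2(q^{m/2}-1)\Big] & m\text{ even},\\[2mm] \dfrac{n^2}{(q^m-1)^2}\Big[(q^m-1)-q^{(m-1)/2}\Big] & m\text{ odd}.\end{cases}$$
   Context: Bicyclic codes: linear subspaces of $\mathbb{F}_q^{n\times n}$ closed under cyclic shifts of rows and columns, identified with ideals of $\mathbb{F}_q[X,Y]/\langle X^n-1,Y^n-1\rangle$ via $c\mapsto c(X,Y)=\sum c_{i,j}X^iY^j$. Let $\alpha$ be a primitive $n$-th root of unity in $\mathbb{F}_{q^m}$. The $q$-ary cyclotomic coset of $(x,y)$ is $\{(xq^k\bmod n, yq^k\bmod n):k\ge0\}$. The narrow-sense bicyclic hyperbolic code of length $n\times n$ over $\mathbb{F}_q$ with design distance $d$ is the set of $c\in\mathbb{F}_q^{n\times n}$ with $c(\alpha^x,\alpha^y)=0$ for all $(x,y)$ in the union $Z$ of the $q$-ary cyclotomic cosets of the elements of the designed set $Z_{des}=\{(x\bmod n, y\bmod n):1\le x,y\le n,\ xy<d\}$. The Euclidean dual of $C$ is $C^\perp=\{u:\sum_{i,j}u_{i,j}v_{i,j}=0\ \forall v\in C\}$. *)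

From HB Require Import structures.
From mathcomp Require Import all_boot all_order all_algebra all_field.
Set Implicit Arguments. Unset Strict Implicit. Unset Printing Implicit Defensive.
Import GRing.Theory Num.Theory.
Local Open Scope ring_scope.

Definition is_mult_order (n q m : nat) : Prop :=
  [/\ (0 < m)%N, q ^ m = 1 %[mod n]
   & forall k : nat, (0 < k)%N -> q ^ k = 1 %[mod n] -> (m <= k)%N].

Definition in_Zdes (n d a b : nat) : Prop :=
  exists x y : nat, [/\ (1 <= x <= n)%N, (1 <= y <= n)%N, (x * y < d)%N,
                        a = x %% n & b = y %% n]%N.

Definition in_Z (n q d a b : nat) : Prop :=
  exists (k x y : nat), in_Zdes n d x y /\
    a = ((x * q ^ k) %% n)%N /\ b = ((y * q ^ k) %% n)%N.

Definition bieval (F : fieldType) (L : fieldExtType F) (n : nat)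
    (c : 'M[F]_n) (u v : L) : L :=
  \sum_(i < n) \sum_(j < n) (c i j)%:A * u ^+ i * v ^+ j.

Definition bch_hyp_code (F : fieldType) (L : fieldExtType F) (n q d : nat)
    (alpha : L) (c : 'M[F]_n) : Prop :=
  forall a b : nat, in_Z n q d a b -> bieval c (alpha ^+ a) (alpha ^+ b) = 0.

Definition euclid_dual (F : fieldType) (n : nat) (C : 'M[F]_n -> Prop)
    (u : 'M[F]_n) : Prop :=
  forall v : 'M[F]_n, C v -> \sum_(i < n) \sum_(j < n) u i j * v i j = 0.

Definition Delta (n q m : nat) : rat :=
  let Q : rat := (q ^ m)%N%:R - 1 in
  if ~~ odd m then
    (n ^ 2)%N%:R / Q ^+ 2 * (Q - 2%:R * ((q ^ (m %/ 2))%N%:R - 1))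
  else
    (n ^ 2)%N%:R / Q ^+ 2 * (Q - (q ^ ((m - 1) %/ 2))%N%:R).

Arguments bieval {F L} n c u v.
Arguments bch_hyp_code {F L} n q d alpha c.
Arguments euclid_dual {F} n C u.

From HB Require Import structures.
From mathcomp Require Import all_boot all_order all_algebra all_field.
From mathcomp Require Import zify ring.
Import GRing.Theory Num.Theory.
Set Implicit Arguments. Unset Strict Implicit. Unset Printing Implicit Defensive.

(* Let u be orthogonal to the code and suppose w = u(alpha^a, alpha^b) <> 0
   at a zero (a, b).  Choose lambda with Tr (lambda w) <> 0 and put
   v_ij = tr (lambda alpha^(a i + b j)).  Expanding the trace, v(alpha^s, alpha^t) is a sum of
   products of geometric sums in alpha^(a q^k + s) and alpha^(b q^k + t); these vanish unless
   (s, t) = -q^k (a, b) mod n, so v lies in the code when no zero (s, t) is of that form, and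
   then pairing u with v gives Tr (lambda w) = 0, a contradiction.  Two such zeros of the hyperbolic code give, after scaling by
   r = (q^m - 1) / n, positive X, Y, X', Y' with X Y, X' Y' < r^2 d and
   X' = -q^K X, Y' = -q^K Y mod q^m - 1.  In the mixed radix (q^(m-K), q^K), multiplication
   by -q^K swaps and complements the two digits, and a case analysis on the leading digits
   shows max (X Y, X' Y') >= (q^m - 1)^2 Delta / n^2 >= r^2 d. *)

(* X' is the residue of -w X modulo u w - 1: multiplication by -w swaps and complements the
   two mixed-radix digits of X. *)
Definition rot_compl (u w X X' : nat) : Prop :=
  exists x1 x0 x1' x0',
    [/\ X = x1 * u + x0, X' = x0' * w + x1', x0 + x0' + 1 = u & x1 + x1' + 1 = w].

Lemma rot_complC u w X X' : rot_compl u w X X' -> rot_compl w u X' X.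
Proof. by case=> [x1 [x0 [x1' [x0' [-> -> hu hw]]]]]; exists x0', x1', x0, x1; split; lia. Qed.

Lemma rot_compl_of_dvd u w N X X' : N + 1 = u * w -> 0 < X < N -> 0 < X' < N ->
  N %| X' + w * X -> rot_compl u w X X'.
Proof.
move=> huw /andP[X0 XN] /andP[X'0 X'N] hdvd.
have u0 : 0 < u by case: u huw; lia.
have eX := divn_eq X u; have x0u : X %% u < u by rewrite ltn_pmod.
have x1w : X %/ u < w by rewrite ltn_divLR // mulnC -huw; apply: ltn_addr.
move: eX x0u x1w; set x1 := X %/ u; set x0 := X %% u => eX x0u x1w.
clearbody x1 x0.
exists x1, x0, (w - 1 - x1), (u - 1 - x0).
split; [by [] | | lia | lia].
have [x0' ex0'] : exists x0', u = x0 + x0' + 1 by exists (u - 1 - x0); lia.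
have [x1' ex1'] : exists x1', w = x1 + x1' + 1 by exists (w - 1 - x1); lia.
have -> : u - 1 - x0 = x0' by lia.
have -> : w - 1 - x1 = x1' by lia.
have ZN : x0' * w + x1' + w * X = x1.+1 * N.
  have : x0' * w + x1' + w * X + x1.+1 = x1.+1 * (N + 1).
    by rewrite huw eX ex0' ex1'; ring.
  lia.
have Z_lt : x0' * w + x1' < N.
  have : x0' * w + x1' + (x0 * w + x1) = N.
    have : x0' * w + x1' + (x0 * w + x1) + 1 = N + 1 by rewrite huw ex0' ex1'; ring.
    lia.
  have : 0 < x0 * w + x1.
    have [x1_0|x1_pos] := posnP x1; last by rewrite addn_gt0 x1_pos orbT.
    by rewrite x1_0 addn0 muln_gt0 ex1' addn1 andbT; lia.
  lia.
have : X' = x0' * w + x1' %[mod N].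
  apply/eqP; rewrite -(eqn_modDr (w * X)); apply/eqP.
  by rewrite ZN modnMl; apply/eqP.
by rewrite !modn_small.
Qed.

Lemma leq_mul_cross B a a' b b' : B <= a * a' -> B <= b * b' ->
  B <= a * b \/ B <= a' * b'.
Proof.
move=> ha hb; case: (leqP B (a * b)) => [|hab]; [by left | right].
rewrite leqNgt; apply/negP => hab'.
by have := ltn_mul hab hab'; rewrite mulnACA ltnNge leq_mul.
Qed.

(* With N = u w - 1, [B_lt] and [B_le] read B <= N - w and B <= (u - 1)^2.  A number
   x1 u + x0 is "low" when x1 = 0, "high" otherwise, and "top" when x0 = u - 1. *)
Section ProductBound.
Variables u w B : nat.
Hypotheses (w_le_u : w <= u) (B_lt : B + w < u * w) (B_le : B + 2 * u <= u * u + 1).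

Lemma high_high X Y : u <= X -> u <= Y -> B <= X * Y.
Proof. by move=> hX hY; have := leq_mul hX hY; nia. Qed.

Lemma low_mul_compl x0 x0' x1' : x0 + x0' + 1 = u -> x1' + 1 = w ->
  0 < x0 -> 0 < x0' -> B <= x0 * (x0' * w + x1').
Proof.
move=> hx0 hx1' x0_pos x0'_pos.
have [a ea] : exists a, x0 = a.+1 by exists x0.-1; lia.
have [b eb] : exists b, x0' = b.+1 by exists x0'.-1; lia.
by subst; nia.
Qed.

Lemma top_low x0 x1' y0 y0' : x0 + 1 = u -> x1' + 1 = w -> y0 + y0' + 1 = u ->
  0 < x1' -> B <= x0 * y0 \/ B <= x1' * (y0' * w + x1').
Proof.
move=> hx0 hx1' hy x1'_pos.
case: (leqP w y0) => hy0; [left | right].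
  by have := leq_mul (leqnn x0) hy0; nia.
subst u w.
have [e ee] : exists e, x0 = x1' + e by exists (x0 - x1'); lia.
have [c ec] : exists c, x1' = c.+1 by exists x1'.-1; lia.
have [f ef] : exists f, y0' = e + f by exists (y0' - e); lia.
subst x0 x1' y0'.
by have [e0|e_pos] := posnP e; nia.
Qed.

Lemma low_wide x0 x0' x1' : x0 + x0' + 1 = u -> x1' + 1 = w ->
  B <= x0 * u \/ B <= (x0' * w + x1') * w.
Proof.
move=> hx0 hx1'; case: (leqP w x0) => hw; [left | right].
  by have := leq_mul hw (leqnn u); nia.
have [e ee] : exists e, x0' = u - w + e by exists (x0' - (u - w)); lia.
have [c ec] : exists c, u = w + c by exists (u - w); lia.
by subst x0' u; rewrite addKn in hx0 *; nia.
Qed.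

Lemma low_top_high x0 x0' x1' y1 y0 y1' : x0 + x0' + 1 = u -> x1' + 1 = w ->
  y0 + 1 = u -> y1 + y1' + 1 = w -> 0 < x0 -> 0 < y1 -> 0 < y1' ->
  B <= x0 * (y1 * u + y0) \/ B <= (x0' * w + x1') * y1'.
Proof.
move=> hx0 hx1' hy0 hy1 x0_pos y1_pos y1'_pos.
case: (leqP w (x0 * y1.+1)) => hw.
  by left; have := leq_mul hw (leqnn u); nia.
right; case: (posnP y1'.-1) => hy1'; last by nia.
have x0_1 : x0 = 1 by nia.
by nia.
Qed.

Lemma low_products x0 x0' x1' Y Y' : x0 + x0' + 1 = u -> x1' + 1 = w ->
  rot_compl u w Y Y' -> 0 < x0 -> 0 < x0' * w + x1' -> 0 < Y -> 0 < Y' ->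
  B <= x0 * Y \/ B <= (x0' * w + x1') * Y'.
Proof.
move=> hx0 hx1' [y1 [y0 [y1' [y0' [-> -> hy0 hy1]]]]] x0_pos X'_pos Y_pos Y'_pos.
have [y1_0|y1_pos] := posnP y1.
  have y1'_x1' : y1' = x1' by lia.
  subst y1'; rewrite y1_0 mul0n add0n in Y_pos *.
  have [x0'_0|x0'_pos] := posnP x0'.
    by rewrite x0'_0 mul0n add0n in X'_pos *; apply: top_low; lia.
  have [y0'_0|y0'_pos] := posnP y0'.
    rewrite y0'_0 mul0n add0n mulnC [_ * x1']mulnC in Y'_pos *.
    by apply: (top_low (x0 := y0) (y0' := x0')); lia.
  by apply: leq_mul_cross; apply: low_mul_compl.
have [y0'_0|y0'_pos] := posnP y0'.
  rewrite y0'_0 mul0n add0n in Y'_pos *.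
  by apply: (low_top_high hx0 hx1') => //; lia.
have hYu : u <= y1 * u + y0 by rewrite (leq_trans _ (leq_addr _ _)) ?leq_pmull.
have hY'w : w <= y0' * w + y1' by rewrite (leq_trans _ (leq_addr _ _)) ?leq_pmull.
case: (low_wide hx0 hx1') => h; [left | right]; apply: (leq_trans h).
  exact: leq_mul.
exact: leq_mul.
Qed.

Lemma rot_compl_products X X' Y Y' : rot_compl u w X X' -> rot_compl u w Y Y' ->
  0 < X -> 0 < X' -> 0 < Y -> 0 < Y' -> B <= X * Y \/ B <= X' * Y'.
Proof.
move=> [x1 [x0 [x1' [x0' [-> -> hx0 hx1]]]]] hY X_pos X'_pos Y_pos Y'_pos.
have [x1_0|x1_pos] := posnP x1.
  have x1'_w : x1' + 1 = w by lia.
  rewrite x1_0 mul0n add0n in X_pos *.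
  exact: low_products.
move: hY Y_pos Y'_pos => [y1 [y0 [y1' [y0' [-> -> hy0 hy1]]]]] Y_pos Y'_pos.
have [y1_0|y1_pos] := posnP y1.
  have y1'_w : y1' + 1 = w by lia.
  rewrite y1_0 mul0n add0n in Y_pos *.
  rewrite mulnC [(x0' * w + x1') * _]mulnC.
  apply: low_products => //.
  by exists x1, x0, x1', x0'.
by left; apply: high_high; apply: leq_trans (leq_addr _ _); rewrite leq_pmull.
Qed.

End ProductBound.

Definition Delta_nat (q m : nat) : nat :=
  if ~~ odd m then q ^ m - 1 - 2 * (q ^ (m %/ 2) - 1) else q ^ m - 1 - q ^ ((m - 1) %/ 2).

Lemma Delta_nat_bounds q m K : 1 < q -> 0 < m -> K <= m - K ->
  Delta_nat q m + q ^ K < q ^ (m - K) * q ^ K /\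
  Delta_nat q m + 2 * q ^ (m - K) <= q ^ (m - K) * q ^ (m - K) + 1.
Proof.
move=> q_gt1 m_pos hK; rewrite -expnD subnK; last by lia.
have hm := divn_eq m 2; rewrite modn2 in hm.
have q_pos : 0 < q by lia.
set h := m %/ 2 in hm *.
have w_le : q ^ K <= q ^ h by rewrite leq_pexp2l //; lia.
have P_pos : 0 < q ^ h by rewrite expn_gt0 q_pos.
rewrite /Delta_nat; case: (odd m) hm => /= hm.
- have -> : (m - 1) %/ 2 = h by lia.
  have eqm : q ^ m = q * (q ^ h * q ^ h) by rewrite -expnD -expnS hm; congr (_ ^ _); lia.
  have u_ge : q * q ^ h <= q ^ (m - K) by rewrite -expnS leq_pexp2l //; lia.
  move: w_le P_pos eqm u_ge; set P := q ^ h; set u := q ^ (m - K); set w := q ^ K.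
  by move=> w_le P_pos -> u_ge; split; nia.
- have eqm : q ^ m = q ^ h * q ^ h by rewrite -expnD hm; congr (_ ^ _); lia.
  have u_ge : q ^ h <= q ^ (m - K) by rewrite leq_pexp2l //; lia.
  have P_gt1 : 1 < q ^ h by rewrite -(expn0 q) ltn_exp2l //; lia.
  move: w_le P_gt1 eqm u_ge; set P := q ^ h; set u := q ^ (m - K); set w := q ^ K.
  by move=> w_le P_gt1 -> u_ge; split; nia.
Qed.

Lemma neg_shift_products q m K X Y X' Y' : 1 < q -> 0 < m -> K < m ->
  0 < X -> 0 < Y -> 0 < X' -> 0 < Y' ->
  q ^ m - 1 %| X' + q ^ K * X -> q ^ m - 1 %| Y' + q ^ K * Y ->
  Delta_nat q m <= X * Y \/ Delta_nat q m <= X' * Y'.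
Proof.
move=> q_gt1 m_pos K_lt X_pos Y_pos X'_pos Y'_pos hX hY.
set N := q ^ m - 1; set B := Delta_nat q m.
have [XY_lt|] := boolP (X * Y < B); last by rewrite -leqNgt; left.
have [X'Y'_lt|] := boolP (X' * Y' < B); last by rewrite -leqNgt; right.
have B_le_N : B <= N by rewrite /B /Delta_nat; case: ifP => _; apply: leq_subr.
have lt_N a b : 0 < a -> 0 < b -> a * b < B -> 0 < a < N /\ 0 < b < N.
  by move=> a_pos b_pos ab_lt; split; apply/andP; split => //; nia.
have [XN YN] := lt_N _ _ X_pos Y_pos XY_lt.
have [X'N Y'N] := lt_N _ _ X'_pos Y'_pos X'Y'_lt.
have huw : N + 1 = q ^ (m - K) * q ^ K.
  by rewrite -expnD subnK ?subnK ?expn_gt0 ?(ltnW q_gt1) // ltnW.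
have rX := rot_compl_of_dvd huw XN X'N hX.
have rY := rot_compl_of_dvd huw YN Y'N hY.
have [hK|hK] := leqP K (m - K).
  have [B_lt B_le] := Delta_nat_bounds q_gt1 m_pos hK.
  have w_le : q ^ K <= q ^ (m - K) by rewrite leq_pexp2l ?(ltnW q_gt1).
  exact: (rot_compl_products w_le B_lt B_le rX rY).
have eK : m - (m - K) = K by rewrite subKn // ltnW.
have hK' : m - K <= m - (m - K) by rewrite eK ltnW.
have [B_lt B_le] := Delta_nat_bounds q_gt1 m_pos hK'.
rewrite eK in B_lt B_le.
have w_le : q ^ (m - K) <= q ^ K by rewrite leq_pexp2l ?(ltnW q_gt1) ?(ltnW hK).
by have [] := rot_compl_products w_le B_lt B_le (rot_complC rX) (rot_complC rY)
  X'_pos X_pos Y'_pos Y_pos; [right | left].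
Qed.

Section DeltaBound.
Local Open Scope ring_scope.

Lemma DeltaE n q m : (1 < q)%N -> (0 < m)%N ->
  Delta n q m = (n ^ 2)%N%:R / (q ^ m - 1)%N%:R ^+ 2 * (Delta_nat q m)%:R.
Proof.
move=> q_gt1 m_pos.
rewrite /Delta /Delta_nat /=.
have -> : (q ^ m)%N%:R - 1 = (q ^ m - 1)%N%:R :> rat by rewrite natrB // expn_gt0 ltnW.
have hm := divn_eq m 2; rewrite modn2 in hm.
set h := (m %/ 2)%N in hm *.
have P_pos : (0 < q ^ h)%N by rewrite expn_gt0 ltnW.
case: (odd m) hm => /= hm; congr (_ * _).
- have -> : ((m - 1) %/ 2 = h)%N by lia.
  have eqm : (q ^ m = q * (q ^ h * q ^ h))%N by rewrite -expnD -expnS hm; congr (expn _ _); lia.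
  have hle : (q ^ h <= q ^ m - 1)%N by rewrite eqm; nia.
  by rewrite (natrB _ hle).
- have eqm : (q ^ m = q ^ h * q ^ h)%N by rewrite -expnD hm; congr (expn _ _); lia.
  have hle : (2 * (q ^ h - 1) <= q ^ m - 1)%N by rewrite eqm; nia.
  by rewrite (natrB _ hle) natrM (natrB _ P_pos).
Qed.

Lemma Delta_scale n q m r d : (0 < n)%N -> (1 < q)%N -> (0 < m)%N ->
  (q ^ m - 1 = r * n)%N -> d%:R <= Delta n q m -> (r * r * d <= Delta_nat q m)%N.
Proof.
move=> n_pos q_gt1 m_pos eN; rewrite DeltaE // eN.
have r_pos : (0 < r)%N.
  have : (1 < q ^ m)%N by rewrite -(expn0 q) ltn_exp2l.
  by rewrite -subn_gt0 eN muln_gt0 => /andP[].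
have -> : (n ^ 2)%N%:R / (r * n)%N%:R ^+ 2 = (r%:R ^+ 2)^-1 :> rat.
  rewrite natrM natrX exprMn invfM mulrCA mulfV ?mulr1 //.
  by rewrite expf_neq0 // pnatr_eq0 -lt0n.
rewrite mulrC ler_pdivlMr ?exprn_gt0 ?ltr0n //.
by rewrite -(ler_nat rat) !natrM -expr2 mulrC.
Qed.

End DeltaBound.

Lemma in_ZP n q d a b : in_Z n q d a b ->
  exists X Y k, [/\ 0 < X, 0 < Y, X * Y < d, a = X * q ^ k %[mod n] & b = Y * q ^ k %[mod n]].
Proof.
case=> k [x [y [[X [Y [/andP[X_pos _] /andP[Y_pos _] XY_lt -> ->]]] [-> ->]]]].
by exists X, Y, k; split; rewrite // modn_mod modnMml.
Qed.

Lemma modnM_congr d x y z : x = y %[mod d] -> x * z = y * z %[mod d].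
Proof. by move=> h; rewrite -modnMml h modnMml. Qed.

Lemma modnD_congr d x y x' y' : x = y %[mod d] -> x' = y' %[mod d] ->
  x + x' = y + y' %[mod d].
Proof. by move=> h h'; rewrite -modnDm h h' modnDm. Qed.

Lemma dvd_coset_reduce n q m X1 X2 a s k k1 k2 : 0 < m -> q ^ m = 1 %[mod n] ->
  a = X1 * q ^ k1 %[mod n] -> s = X2 * q ^ k2 %[mod n] -> n %| a * q ^ k + s ->
  n %| X1 * q ^ ((k1 + k + (m - 1) * k2) %% m) + X2.
Proof.
move=> m_pos hq ha hs hdvd.
(* q ^ ((m - 1) * k2) inverts q ^ k2 modulo n, which normalises the exponent of X2 to 0. *)
have qmX e : (q ^ m) ^ e = 1 %[mod n] by rewrite -modnXm hq modnXm exp1n.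
have qX e : q ^ e = q ^ (e %% m) %[mod n].
  by rewrite {1}(divn_eq e m) expnD [_ %/ _ * m]mulnC expnM -modnMml qmX modnMml mul1n.
have e1 : (a * q ^ k + s) * q ^ ((m - 1) * k2) =
          X1 * q ^ (k1 + k + (m - 1) * k2) + X2 * (q ^ m) ^ k2 %[mod n].
  have -> : X1 * q ^ (k1 + k + (m - 1) * k2) + X2 * (q ^ m) ^ k2 =
            (X1 * q ^ k1 * q ^ k + X2 * q ^ k2) * q ^ ((m - 1) * k2).
    rewrite mulnDl -!mulnA -!expnD -expnM; congr (_ * _ + _ * _); congr expn; first lia.
    by rewrite subn1 -mulSn prednK.
  by apply/modnM_congr/modnD_congr => //; apply: modnM_congr.
have e2 : X1 * q ^ (k1 + k + (m - 1) * k2) + X2 * (q ^ m) ^ k2 =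
          X1 * q ^ ((k1 + k + (m - 1) * k2) %% m) + X2 %[mod n].
  apply: modnD_congr; first by rewrite ![X1 * _]mulnC; apply: modnM_congr.
  by rewrite -{2}(muln1 X2) mulnC [X2 * 1]mulnC; apply: modnM_congr.
by move/(dvdn_mulr (q ^ ((m - 1) * k2))): hdvd; rewrite /dvdn e1 e2.
Qed.

Lemma in_Z_neg_coset_free n q m d a b s t k : 0 < n -> 1 < q -> is_mult_order n q m ->
  (d%:R <= Delta n q m)%R -> in_Z n q d a b -> in_Z n q d s t ->
  ~~ ((n %| a * q ^ k + s) && (n %| b * q ^ k + t)).
Proof.
move=> n_pos q_gt1 [m_pos hqm _] hd.
move=> /in_ZP[X1 [Y1 [k1 [X1_pos Y1_pos XY1_lt ha hb]]]].
move=> /in_ZP[X2 [Y2 [k2 [X2_pos Y2_pos XY2_lt hs ht]]]].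
apply/negP => /andP[/(dvd_coset_reduce m_pos hqm ha hs) hX /(dvd_coset_reduce m_pos hqm hb ht) hY].
move: hX hY; set K := (k1 + k + (m - 1) * k2) %% m => hX hY.
have [r eN] : exists r, q ^ m - 1 = r * n.
  have q_pos : 0 < q by apply: ltnW.
  by apply/dvdnP; rewrite -eqn_mod_dvd ?expn_gt0 ?q_pos // hqm.
have hB := Delta_scale n_pos q_gt1 m_pos eN hd.
have r_pos : 0 < r.
  have : 1 < q ^ m by rewrite -(expn0 q) ltn_exp2l.
  by rewrite -subn_gt0 eN muln_gt0 => /andP[].
have scale_dvd Z1 Z2 : n %| Z1 * q ^ K + Z2 -> q ^ m - 1 %| r * Z2 + q ^ K * (r * Z1).
  by rewrite eN -(dvdn_pmul2l r_pos); congr (_ %| _); ring.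
have scale_lt Z1 Z2 : Z1 * Z2 < d -> r * Z1 * (r * Z2) < Delta_nat q m.
  by move=> hZ; apply: leq_trans hB; rewrite mulnACA ltn_pmul2l ?muln_gt0 ?r_pos.
have K_lt : K < m by rewrite ltn_pmod.
have scale_pos Z : 0 < Z -> 0 < r * Z by rewrite muln_gt0 r_pos.
have [h|h] := neg_shift_products q_gt1 m_pos K_lt (scale_pos _ X1_pos) (scale_pos _ Y1_pos)
  (scale_pos _ X2_pos) (scale_pos _ Y2_pos) (scale_dvd _ _ hX) (scale_dvd _ _ hY).
- by have := leq_ltn_trans h (scale_lt _ _ XY1_lt); rewrite ltnn.
- by have := leq_ltn_trans h (scale_lt _ _ XY2_lt); rewrite ltnn.
Qed.

Local Open Scope ring_scope.

Section FiniteFieldTrace.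
Variables (F : finFieldType) (L : fieldExtType F).

Lemma expr_card_powD k (x y : L) :
  (x + y) ^+ (#|F| ^ k) = x ^+ (#|F| ^ k) + y ^+ (#|F| ^ k).
Proof.
have [p _ pcharFp] := finPcharP F.
have pcharLp : p \in [pchar L] by rewrite pchar_lalg.
rewrite (card_pprimeChar pcharFp) -expnM.
elim: (_ * k)%N => [|j IHj]; first by rewrite !expr1.
by rewrite expnSr !exprM IHj -!(pFrobenius_autE pcharLp) rmorphD.
Qed.

Lemma expr_card_pow_sum k (I : Type) (r : seq I) (P : pred I) (f : I -> L) :
  (\sum_(i <- r | P i) f i) ^+ (#|F| ^ k) = \sum_(i <- r | P i) f i ^+ (#|F| ^ k).
Proof.
apply: (big_morph (fun x : L => x ^+ (#|F| ^ k))); first exact: expr_card_powD.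
by rewrite expr0n expn_eq0; case: #|F| (finNzRing_gt1 F).
Qed.

Lemma expr_card_pow_alg k (c : F) : (c%:A : L) ^+ (#|F| ^ k) = c%:A.
Proof.
elim: k => [|k IHk]; first by rewrite expr1.
by rewrite expnSr exprM IHk -in_algE -rmorphXn expf_card.
Qed.

Lemma expr_card_pow_dim (x : L) : x ^+ (#|F| ^ \dim {:L}) = x.
Proof. by have := Fermat's_little_theorem (aspacef L) x; rewrite memvf => /esym/eqP. Qed.

Lemma expr_card_fixed (x : L) : x ^+ #|F| = x -> {c : F | x = c%:A}.
Proof.
move=> hx; have := Fermat's_little_theorem (1%AS : {subfield L}) x.
by rewrite dimv1 expn1 hx eqxx => /vlineP/sig_eqW[c ->]; exists c.
Qed.

Definition Tr (x : L) : L := \sum_(k < \dim {:L}) x ^+ (#|F| ^ k).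

Lemma Tr_expr_card (x : L) : Tr x ^+ #|F| = Tr x.
Proof.
rewrite /Tr -[#|F| in X in _ ^+ X]expn1 expr_card_pow_sum.
under eq_bigr => k _ do rewrite -exprM -expnSr.
have := adim_gt0 (aspacef L); have := expr_card_pow_dim x.
case: (\dim {:L}) => // m hx _.
by rewrite big_ord_recr big_ord_recl /= hx expn0 expr1 addrC.
Qed.

Lemma TrZ (c : F) (x : L) : Tr (c%:A * x) = c%:A * Tr x.
Proof. by rewrite /Tr mulr_sumr; apply: eq_bigr => k _; rewrite exprMn expr_card_pow_alg. Qed.

Lemma Tr_sum (I : Type) (r : seq I) (P : pred I) (f : I -> L) :
  Tr (\sum_(i <- r | P i) f i) = \sum_(i <- r | P i) Tr (f i).
Proof. by rewrite /Tr; under eq_bigr => k _ do rewrite expr_card_pow_sum; rewrite exchange_big. Qed.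

Definition trF (x : L) : F := sval (expr_card_fixed (Tr_expr_card x)).

Lemma trFE (x : L) : (trF x)%:A = Tr x.
Proof. by rewrite /trF; case: expr_card_fixed. Qed.

Lemma card_finvect : #|finvect_type L| = (#|F| ^ \dim {:L})%N.
Proof.
pose T := finvect_type L.
by rewrite -(@card_vspacef F T (Vector.class (T : vectType F))) card_vspace.
Qed.

Lemma exists_Tr_neq0 : exists x : L, Tr x != 0.
Proof.
(* Tr is a polynomial of degree q ^ (m - 1) < #|L|, hence not zero on all of L. *)
have [x hx | Tr0] := pickP (fun x : finvect_type L => Tr (x : L) != 0); first by exists x.
exfalso; have q_gt1 := finNzRing_gt1 F; have m_pos := adim_gt0 (aspacef L).
move: q_gt1 m_pos Tr0; set q := #|F|; set m := \dim {:L} => q_gt1 m_pos Tr0.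
pose p : {poly L} := \sum_(k < m) 'X^(q ^ k).
have p_neq0 : p != 0.
  apply/eqP => /(congr1 (fun r : {poly L} => r`_1)).
  rewrite coef0 /p coef_sum -(prednK m_pos) big_ord_recl /= coefXn expn0 eqxx big1 ?addr0.
    by move/eqP; rewrite oner_eq0.
  by move=> i _; rewrite coefXn -{1}(expn0 q) eqn_exp2l.
have roots_p : all (root p) (enum (finvect_type L)).
  apply/allP => x _; rewrite /root /p horner_sum.
  have /negbFE/eqP Trx := Tr0 x.
  by apply/eqP; rewrite -[in RHS]Trx; apply: eq_bigr => k _; rewrite hornerXn.
have size_p : (size p <= (q ^ m.-1).+1)%N.
  apply: leq_trans (size_sum _ _ _) _; apply/bigmax_leqP => i _.
  by rewrite size_polyXn ltnS leq_pexp2l ?(ltnW q_gt1) // -ltnS prednK.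
have := leq_trans (max_poly_roots p_neq0 roots_p (enum_uniq _)) size_p.
rewrite (_ : size _ = #|finvect_type L|); last by rewrite cardE.
rewrite card_finvect -/q -/m.
rewrite -(prednK m_pos) expnS ltnS.
have : (0 < q ^ m.-1)%N by rewrite expn_gt0 (ltnW q_gt1).
by move: q_gt1; set z := (q ^ m.-1)%N; nia.
Qed.

End FiniteFieldTrace.

Lemma sum_prim_root_expr_eq0 (K : fieldType) n e (z : K) :
  n.-primitive_root z -> ~~ (n %| e)%N -> \sum_(i < n) (z ^+ e) ^+ i = 0.
Proof.
move=> prim_z n_ndvd_e; have ze_neq1 : z ^+ e != 1 by rewrite -(prim_order_dvd prim_z).
have : (z ^+ e) ^+ n - 1 = 0 by rewrite exprAC (prim_expr_order prim_z) expr1n subrr.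
by rewrite subrX1 => /eqP; rewrite mulf_eq0 subr_eq0 (negbTE ze_neq1) => /eqP.
Qed.

Definition zero_code (F : fieldType) (L : fieldExtType F) (n : nat)
    (Z : nat -> nat -> Prop) (alpha : L) (c : 'M[F]_n) : Prop :=
  forall a b : nat, Z a b -> bieval n c (alpha ^+ a) (alpha ^+ b) = 0.
Arguments zero_code {F L} n Z alpha c.

Section TraceCodewords.
Variables (F : finFieldType) (L : fieldExtType F) (n : nat).

Lemma bieval_trace_word (lam x y u v : L) :
  bieval n (\matrix_(i, j) trF (lam * (x ^+ i * y ^+ j))) u v =
  \sum_(k < \dim {:L}) lam ^+ (#|F| ^ k) *
    (\sum_(i < n) (x ^+ (#|F| ^ k) * u) ^+ i) * (\sum_(j < n) (y ^+ (#|F| ^ k) * v) ^+ j).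
Proof.
rewrite /bieval; under eq_bigr => i _ do under eq_bigr => j _ do
  rewrite mxE trFE /Tr !mulr_suml.
under eq_bigr => i _ do rewrite exchange_big /=.
rewrite exchange_big /=; apply: eq_bigr => k _.
rewrite -mulrA big_distrlr mulr_sumr; apply: eq_bigr => i _.
rewrite mulr_sumr; apply: eq_bigr => j _.
by rewrite /= !exprMn (exprAC x) (exprAC y); ring.
Qed.

Lemma trF_pairing (c : 'M[F]_n) (f : 'I_n -> 'I_n -> L) :
  (\sum_(i < n) \sum_(j < n) c i j * trF (f i j))%:A =
  Tr (\sum_(i < n) \sum_(j < n) (c i j)%:A * f i j).
Proof.
rewrite scaler_suml Tr_sum; apply: eq_bigr => i _.
rewrite scaler_suml Tr_sum; apply: eq_bigr => j _.
by rewrite -scalerA -mulr_algl trFE TrZ.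
Qed.

Lemma zero_code_dual_sub (Z : nat -> nat -> Prop) (alpha : L) (u : 'M[F]_n) :
  n.-primitive_root alpha ->
  (forall a b s t k, Z a b -> Z s t ->
     ~~ ((n %| a * #|F| ^ k + s) && (n %| b * #|F| ^ k + t)))%N ->
  euclid_dual n (zero_code n Z alpha) u -> zero_code n Z alpha u.
Proof.
move=> prim_alpha Z_free u_dual a b Zab; set w := bieval n u _ _.
apply/eqP; apply: contraT => w_neq0.
have [l Trl_neq0] := exists_Tr_neq0 L.
pose v : 'M[F]_n := \matrix_(i, j) trF (l / w * ((alpha ^+ a) ^+ i * (alpha ^+ b) ^+ j)).
have v_code : zero_code n Z alpha v.
  move=> s t Zst; rewrite bieval_trace_word big1 // => k _.
  rewrite -!exprM -!exprD.
  have := Z_free a b s t k Zab Zst; rewrite negb_and.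
  case/orP => /(sum_prim_root_expr_eq0 prim_alpha) ->.
    by rewrite mulr0 mul0r.
  by rewrite mulr0.
move: (congr1 (fun c : F => c%:A : L) (u_dual v v_code)) => /=.
under eq_bigr => i _ do under eq_bigr => j _ do rewrite mxE.
rewrite trF_pairing scale0r.
have -> : \sum_(i < n) \sum_(j < n) (u i j)%:A * (l / w * ((alpha ^+ a) ^+ i * (alpha ^+ b) ^+ j))
    = l / w * w.
  rewrite /w /bieval mulr_sumr; apply: eq_bigr => i _.
  by rewrite mulr_sumr; apply: eq_bigr => j _; rewrite mulrCA !mulrA.
by rewrite mulfVK // => Trl0; rewrite Trl0 eqxx in Trl_neq0.
Qed.
End TraceCodewords.

Theorem corollary5 (F : finFieldType) (q n m d : nat)
    (L : fieldExtType F) (alpha : L) :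
  #|F| = q ->
  (0 < n)%N -> coprime n q ->
  is_mult_order n q m -> (3 < m)%N ->
  \dim {: L} = m ->
  n.-primitive_root alpha ->
  (2 <= d)%N -> (d%:R : rat) <= Delta n q m ->
  forall u : 'M[F]_n,
    euclid_dual n (bch_hyp_code n q d alpha) u ->
    bch_hyp_code n q d alpha u.
Proof.
move=> card_F n_pos _ mult_order _ _ prim_alpha _ hd u u_dual.
have q_gt1 : (1 < q)%N by rewrite -card_F finNzRing_gt1.
apply: (zero_code_dual_sub prim_alpha _ u_dual) => a b s t k Zab Zst.
by rewrite card_F; apply: (in_Z_neg_coset_free k n_pos q_gt1 mult_order hd).
Qed.
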